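(* Let $0<\beta<\delta$, $N_0$ a non-negative integer, and set $\hat s=s/(\delta-\beta)$. Let $g(z,t)=\left[\frac{\delta-\beta z-(1-z)\delta e^{(\beta-\delta)t}}{\delta-\beta z-(1-z)\beta e^{(\beta-\delta)t}}\right]^{N_0}$. Then for $0\le z<1$ and $\operatorname{Re}s>0$, $$\int_0^\infty g(z,t)e^{-st}\,dt=\left(\frac{\delta-\beta z}{1-z}\right)^{\hat s}\int_z^1 (1-u)^{\hat s-1}(\delta-\beta u)^{-\hat s-1}u^{N_0}\,du,$$ and this function $G(z,s)$ satisfies the ODE $(1-z)(\delta-\beta z)\,\partial_z G(z,s)=sG(z,s)-z^{N_0}$.
   Context: Powers of positive real numbers are taken with the principal branch. *)

From Stdlib Require Import Reals.
Open Scope R_scope.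

Definition Cplx : Type := (R * R)%type.
Definition Cre (w : Cplx) : R := fst w.
Definition Cim (w : Cplx) : R := snd w.
Definition RtoC (x : R) : Cplx := (x, 0).
Definition Cadd (w v : Cplx) : Cplx := (fst w + fst v, snd w + snd v).
Definition Copp (w : Cplx) : Cplx := (- fst w, - snd w).
Definition Csub (w v : Cplx) : Cplx := Cadd w (Copp v).
Definition Cmul (w v : Cplx) : Cplx :=
  (fst w * fst v - snd w * snd v, fst w * snd v + snd w * fst v).
Definition Cscal (x : R) (w : Cplx) : Cplx := (x * fst w, x * snd w).

Definition Cexp (w : Cplx) : Cplx :=
  (exp (fst w) * cos (snd w), exp (fst w) * sin (snd w)).

Definition Cpow (x : R) (w : Cplx) : Cplx := Cexp (Cscal (ln x) w).

Definition improper_int_inf (f : R -> R) (a l : R) : Prop :=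
  (forall T, a <= T -> inhabited (Riemann_integrable f a T)) /\
  (forall eps, 0 < eps -> exists M, forall T (pr : Riemann_integrable f a T),
      a <= T -> M <= T -> Rabs (RiemannInt pr - l) < eps).

(* Improper Riemann integral  \int_a^b f = l, improper at the right end b
   (agrees with the proper integral when f is integrable on [a,b]) *)
Definition improper_int_right (f : R -> R) (a b l : R) : Prop :=
  (forall c, a <= c < b -> inhabited (Riemann_integrable f a c)) /\
  (forall eps, 0 < eps -> exists d, 0 < d /\ forall c (pr : Riemann_integrable f a c),
      a <= c < b -> b - c < d -> Rabs (RiemannInt pr - l) < eps).

Definition Cimproper_int_inf (f : R -> Cplx) (a : R) (l : Cplx) : Prop :=
  improper_int_inf (fun t => fst (f t)) a (fst l) /\
  improper_int_inf (fun t => snd (f t)) a (snd l).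

Definition Cimproper_int_right (f : R -> Cplx) (a b : R) (l : Cplx) : Prop :=
  improper_int_right (fun t => fst (f t)) a b (fst l) /\
  improper_int_right (fun t => snd (f t)) a b (snd l).

Definition C_deriv_within (F : R -> Cplx) (D : R -> Prop) (z : R) (l : Cplx) : Prop :=
  limit1_in (fun h => (fst (F h) - fst (F z)) / (h - z))
            (fun h => D h /\ h <> z) (fst l) z /\
  limit1_in (fun h => (snd (F h) - snd (F z)) / (h - z))
            (fun h => D h /\ h <> z) (snd l) z.

Definition gfun (beta delta : R) (N0 : nat) (z t : R) : R :=
  ((delta - beta * z - (1 - z) * delta * exp ((beta - delta) * t)) /
   (delta - beta * z - (1 - z) * beta * exp ((beta - delta) * t))) ^ N0.

Definition laplace_integrand (beta delta : R) (N0 : nat) (z : R) (s : Cplx) (t : R) : Cplx :=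
  Cscal (gfun beta delta N0 z t) (Cexp (Copp (Cscal t s))).

Definition rhs_integrand (beta delta : R) (N0 : nat) (s : Cplx) (u : R) : Cplx :=
  let sh := Cscal (/ (delta - beta)) s in
  Cscal (u ^ N0)
    (Cmul (Cpow (1 - u) (Csub sh (RtoC 1)))
          (Cpow (delta - beta * u) (Csub (Copp sh) (RtoC 1)))).

Definition rhs_prefactor (beta delta : R) (z : R) (s : Cplx) : Cplx :=
  Cpow ((delta - beta * z) / (1 - z)) (Cscal (/ (delta - beta)) s).

(* For fixed z, the function r(t) with g(z,t) = r(t)^N0 solves
   r' = (1 - r)(delta - beta r), r(0) = z, and increases to 1 as t -> oo.  Since
   (1 - r)/(delta - beta r) = e^{(beta - delta) t} (1 - z)/(delta - beta z), the
   substitution u = r(t) turns g(z,t) e^{-st} dt into the prefactor times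
   u^N0 (1-u)^{sh-1} (delta - beta u)^{-sh-1} du.  This integrand is
   O((1-u)^{Re sh - 1}) near u = 1, so the integral over [z,1) converges.  Writing
   G(z) = P(z) (I - \int_0^z f) with I = \int_0^1 f, the ODE follows from the product
   rule, P'/P = sh (delta - beta)/((1-z)(delta - beta z)) and
   (1-z)(delta - beta z) P(z) f(z) = z^N0. *)

From Coquelicot Require Import Coquelicot.
From Stdlib Require Import Reals Lra.
Open Scope R_scope.

(** * Complex exponentials and powers *)

Lemma exp_le_exp x y : x <= y -> exp x <= exp y.
Proof. intros [Hlt | ->]; [left; apply exp_increasing | right]; auto. Qed.

Lemma Cexp_add w v : Cmul (Cexp w) (Cexp v) = Cexp (Cadd w v).
Proof.
  destruct w as [w1 w2], v as [v1 v2]; unfold Cmul, Cexp, Cadd; simpl.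
  rewrite exp_plus, cos_plus, sin_plus; f_equal; ring.
Qed.

Lemma Cscal_Cexp x w : 0 < x -> Cscal x (Cexp w) = Cexp (Cadd w (RtoC (ln x))).
Proof.
  intros Hx; destruct w as [w1 w2]; unfold Cscal, Cexp, Cadd, RtoC; simpl.
  rewrite Rplus_0_r, exp_plus, exp_ln by lra; f_equal; ring.
Qed.

Lemma Cpow_exp t w : Cpow (exp t) w = Cexp (Cscal t w).
Proof. unfold Cpow; rewrite ln_exp; reflexivity. Qed.

Lemma Cpow_combine (x y w : R) (sh : Cplx) : 0 < x -> 0 < y -> 0 < w ->
  Cscal (y * w) (Cmul (Cpow x sh) (Cmul (Cpow y (Csub sh (RtoC 1)))
        (Cpow w (Csub (Copp sh) (RtoC 1))))) = Cpow (x * y / w) sh.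
Proof.
  intros Hx Hy Hw. unfold Cpow. rewrite !Cexp_add, Cscal_Cexp by nra.
  f_equal. destruct sh as [a b]; unfold Cadd, Cscal, Csub, Copp, RtoC; simpl.
  rewrite ln_mult, ln_div, ln_mult by (try apply Rdiv_lt_0_compat; nra).
  f_equal; ring.
Qed.

Lemma Cexp_bound w :
  Rabs (fst (Cexp w)) <= exp (fst w) /\ Rabs (snd (Cexp w)) <= exp (fst w).
Proof.
  unfold Cexp; simpl. rewrite !Rabs_mult, Rabs_pos_eq by (left; apply exp_pos).
  pose proof (exp_pos (fst w)).
  assert (Rabs (cos (snd w)) <= 1) by (apply Rabs_le; apply COS_bound).
  assert (Rabs (sin (snd w)) <= 1) by (apply Rabs_le; apply SIN_bound).
  split; nra.
Qed.

Lemma ode_algebra (P T W sh : Cplx) (m q k : R) :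
  Cscal m (Cmul P W) = RtoC 1 ->
  Cscal m (Cadd (Cmul (Cscal q (Cmul P sh)) T) (Cmul P (Copp (Cscal k W))))
  = Csub (Cmul (Cscal (m * q) sh) (Cmul P T)) (RtoC k).
Proof.
  destruct P as [p1 p2], T as [t1 t2], W as [w1 w2], sh as [a b].
  unfold Csub, Cscal, Cmul, Cadd, Copp, RtoC; cbn [fst snd]. intros [= H1 H2]. f_equal.
  - transitivity (m * q * (a * (p1 * t1 - p2 * t2) - b * (p1 * t2 + p2 * t1))
                  - k * (m * (p1 * w1 - p2 * w2))); [ring|]. rewrite H1. ring.
  - transitivity (m * q * (a * (p1 * t2 + p2 * t1) + b * (p1 * t1 - p2 * t2))
                  - k * (m * (p1 * w2 + p2 * w1))); [ring|]. rewrite H2. ring.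
Qed.

(** * Componentwise calculus for complex-valued functions *)

Definition Cis_RInt (g : R -> Cplx) (a b : R) (l : Cplx) : Prop :=
  is_RInt (fun t => fst (g t)) a b (fst l) /\ is_RInt (fun t => snd (g t)) a b (snd l).

Definition Cis_derive (g : R -> Cplx) (x : R) (l : Cplx) : Prop :=
  is_derive (fun t => fst (g t)) x (fst l) /\ is_derive (fun t => snd (g t)) x (snd l).

Definition Ccvg {T : Type} (F : (T -> Prop) -> Prop) (g : T -> Cplx) (l : Cplx) : Prop :=
  filterlim (fun t => fst (g t)) F (locally (fst l)) /\
  filterlim (fun t => snd (g t)) F (locally (snd l)).

Definition CRInt (g : R -> Cplx) (a b : R) : Cplx :=
  (RInt (fun t => fst (g t)) a b, RInt (fun t => snd (g t)) a b).

Lemma is_RInt_lincomb (u v : R -> R) (p q a b lu lv : R) :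
  is_RInt u a b lu -> is_RInt v a b lv ->
  is_RInt (fun t => p * u t + q * v t) a b (p * lu + q * lv).
Proof.
  intros Hu Hv. apply (@is_RInt_plus R_NormedModule);
    apply (@is_RInt_scal R_NormedModule); assumption.
Qed.

Lemma filterlim_lincomb {T : Type} (F : (T -> Prop) -> Prop) {FF : Filter F}
    (u v : T -> R) (p q lu lv : R) :
  filterlim u F (locally lu) -> filterlim v F (locally lv) ->
  filterlim (fun t => p * u t + q * v t) F (locally (p * lu + q * lv)).
Proof.
  intros Hu Hv.
  eapply (filterlim_comp_2 (fun t => scal p (u t)) (fun t => scal q (v t)) plus).
  - exact (filterlim_comp _ _ _ _ _ _ _ _ Hu (filterlim_scal_r p lu)).
  - exact (filterlim_comp _ _ _ _ _ _ _ _ Hv (filterlim_scal_r q lv)).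
  - apply (@filterlim_plus R_AbsRing R_NormedModule).
Qed.

Lemma Cis_RInt_ext (g h : R -> Cplx) (a b : R) (l : Cplx) :
  (forall t, Rmin a b < t < Rmax a b -> g t = h t) -> Cis_RInt g a b l -> Cis_RInt h a b l.
Proof.
  intros E [H1 H2]; split; (eapply is_RInt_ext; [|eassumption]);
    intros t Ht; cbv beta; rewrite (E t Ht); reflexivity.
Qed.

Lemma Cis_RInt_Cmul_l (P : Cplx) (g : R -> Cplx) (a b : R) (l : Cplx) :
  Cis_RInt g a b l -> Cis_RInt (fun t => Cmul P (g t)) a b (Cmul P l).
Proof.
  intros [H1 H2]; split; simpl.
  - replace (fst P * fst l - snd P * snd l) with (fst P * fst l + - snd P * snd l) by ring.
    refine (is_RInt_ext _ _ _ _ _ _ (is_RInt_lincomb _ _ _ _ _ _ _ _ H1 H2)).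
    intros t _. rewrite Ropp_mult_distr_l_reverse. reflexivity.
  - exact (is_RInt_lincomb _ _ _ _ _ _ _ _ H2 H1).
Qed.

Lemma Ccvg_Cmul_l {T : Type} (F : (T -> Prop) -> Prop) {FF : Filter F}
    (P : Cplx) (g : T -> Cplx) (l : Cplx) :
  Ccvg F g l -> Ccvg F (fun t => Cmul P (g t)) (Cmul P l).
Proof.
  intros [H1 H2]; split; simpl.
  - replace (fst P * fst l - snd P * snd l) with (fst P * fst l + - snd P * snd l) by ring.
    eapply filterlim_ext; [|exact (filterlim_lincomb _ _ _ _ _ _ _ H1 H2)].
    intros t; simpl; ring.
  - exact (filterlim_lincomb _ _ _ _ _ _ _ H2 H1).
Qed.

Lemma Cis_derive_mul (A B : R -> Cplx) (x : R) (dA dB : Cplx) :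
  Cis_derive A x dA -> Cis_derive B x dB ->
  Cis_derive (fun t => Cmul (A t) (B t)) x (Cadd (Cmul dA (B x)) (Cmul (A x) dB)).
Proof.
  intros [HA1 HA2] [HB1 HB2].
  pose proof (@is_derive_mult R_AbsRing _ _ x _ _ HA1 HB1 Rmult_comm) as M11.
  pose proof (@is_derive_mult R_AbsRing _ _ x _ _ HA2 HB2 Rmult_comm) as M22.
  pose proof (@is_derive_mult R_AbsRing _ _ x _ _ HA1 HB2 Rmult_comm) as M12.
  pose proof (@is_derive_mult R_AbsRing _ _ x _ _ HA2 HB1 Rmult_comm) as M21.
  split; simpl.
  - replace (fst dA * fst (B x) - snd dA * snd (B x) + (fst (A x) * fst dB - snd (A x) * snd dB))
      with (minus (plus (mult (fst dA) (fst (B x))) (mult (fst (A x)) (fst dB)))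
                  (plus (mult (snd dA) (snd (B x))) (mult (snd (A x)) (snd dB))))
      by (unfold minus, plus, mult, opp; simpl; ring).
    exact (is_derive_minus _ _ _ _ _ M11 M22).
  - replace (fst dA * snd (B x) + snd dA * fst (B x) + (fst (A x) * snd dB + snd (A x) * fst dB))
      with (plus (plus (mult (fst dA) (snd (B x))) (mult (fst (A x)) (snd dB)))
                 (plus (mult (snd dA) (fst (B x))) (mult (snd (A x)) (fst dB))))
      by (unfold plus, mult; simpl; ring).
    exact (is_derive_plus _ _ _ _ _ M12 M21).
Qed.

Lemma Cis_derive_Cpow (phi : R -> R) (x dphi : R) (w : Cplx) :
  0 < phi x -> is_derive phi x dphi ->
  Cis_derive (fun y => Cpow (phi y) w) x (Cscal (dphi / phi x) (Cmul (Cpow (phi x) w) w)).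
Proof.
  intros Hpos Hd.
  assert (Hex : ex_derive phi x) by (eexists; exact Hd).
  assert (HD : Derive (fun y => phi y) x = dphi) by exact (is_derive_unique _ _ _ Hd).
  unfold Cpow, Cexp, Cscal, Cmul; split; simpl;
    auto_derive; try (repeat split; assumption); rewrite HD; field; lra.
Qed.

Lemma limit1_in_of_is_derive (f : R -> R) (D : R -> Prop) (x l : R) :
  is_derive f x l -> limit1_in (fun h => (f h - f x) / (h - x)) (fun h => D h /\ h <> x) l x.
Proof.
  intros H. apply is_derive_Reals in H.
  intros eps He. destruct (H eps He) as [del Hdel].
  exists del. split; [apply cond_pos|].
  intros y [[_ Hyx] Hd]. simpl in *. unfold R_dist in *.
  specialize (Hdel (y - x)). replace (x + (y - x)) with y in Hdel by ring.
  apply Hdel; [lra|exact Hd].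
Qed.

Lemma C_deriv_within_of_Cis_derive (F : R -> Cplx) (D : R -> Prop) (x : R) (l : Cplx) :
  Cis_derive F x l -> C_deriv_within F D x l.
Proof. intros [H1 H2]; split; apply limit1_in_of_is_derive; assumption. Qed.

Lemma improper_int_right_of_cvg (f J : R -> R) (a b l : R) :
  (forall c, a <= c < b -> is_RInt f a c (J c)) ->
  filterlim J (at_left b) (locally l) -> improper_int_right f a b l.
Proof.
  intros Hint Hlim. split.
  - intros c Hc. constructor. apply ex_RInt_Reals_0. eexists; exact (Hint c Hc).
  - intros eps He. destruct (Hlim _ (locally_ball l (mkposreal eps He))) as [d Hd].
    exists d. split; [apply cond_pos|]. intros c pr Hc Hcd.
    rewrite <- RInt_Reals, (is_RInt_unique _ _ _ _ (Hint c Hc)).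
    apply (Hd c); [|lra]. apply Rabs_lt_between'. lra.
Qed.

Lemma improper_int_inf_of_cvg (f J : R -> R) (a l : R) :
  (forall T, a <= T -> is_RInt f a T (J T)) ->
  filterlim J (Rbar_locally p_infty) (locally l) -> improper_int_inf f a l.
Proof.
  intros Hint Hlim. split.
  - intros T HT. constructor. apply ex_RInt_Reals_0. eexists; exact (Hint T HT).
  - intros eps He. destruct (Hlim _ (locally_ball l (mkposreal eps He))) as [M HM].
    exists (M + 1). intros T pr HT HMT.
    rewrite <- RInt_Reals, (is_RInt_unique _ _ _ _ (Hint T HT)).
    apply (HM T); lra.
Qed.

Lemma Cimproper_int_right_of_cvg (F J : R -> Cplx) (a b : R) (l : Cplx) :
  (forall c, a <= c < b -> Cis_RInt F a c (J c)) ->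
  Ccvg (at_left b) J l -> Cimproper_int_right F a b l.
Proof.
  intros Hint [H1 H2]; split; eapply improper_int_right_of_cvg; eauto;
    intros c Hc; apply (Hint c Hc).
Qed.

Lemma Cimproper_int_inf_of_cvg (F J : R -> Cplx) (a : R) (l : Cplx) :
  (forall T, a <= T -> Cis_RInt F a T (J T)) ->
  Ccvg (Rbar_locally p_infty) J l -> Cimproper_int_inf F a l.
Proof.
  intros Hint [H1 H2]; split; eapply improper_int_inf_of_cvg; eauto;
    intros T HT; apply (Hint T HT).
Qed.

(** * Integrals with a power singularity at 1 *)

Lemma Rpower_lt_eventually_0 (a eps : R) : 0 < a -> 0 < eps ->
  exists d, 0 < d /\ forall x, 0 < x < d -> Rpower x a < eps.
Proof.
  intros Ha He. exists (Rpower eps (/ a)). split; [apply exp_pos|].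
  intros x Hx. replace eps with (Rpower (Rpower eps (/ a)) a).
  - apply Rlt_Rpower_l; lra.
  - rewrite Rpower_mult, Rinv_l, Rpower_1 by lra. reflexivity.
Qed.

Section IntegralUpToOne.

Variable f : R -> R.
Hypothesis f_cont : forall u, u < 1 -> continuous f u.

Lemma ex_RInt_lt_1 c c' : c < 1 -> c' < 1 -> ex_RInt f c c'.
Proof.
  intros Hc Hc'. apply (@ex_RInt_continuous R_CompleteNormedModule). intros x Hx.
  apply f_cont. assert (Rmax c c' < 1) by (apply Rmax_lub_lt; lra). lra.
Qed.

Lemma RInt_lt_1_Chasles c c' : c < 1 -> c' < 1 -> RInt f c c' = RInt f 0 c' - RInt f 0 c.
Proof.
  intros Hc Hc'. rewrite <- (RInt_Chasles f 0 c c') by (apply ex_RInt_lt_1; lra).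
  unfold plus; simpl. lra.
Qed.

Lemma is_derive_RInt_lt_1 x : x < 1 -> is_derive (fun y => RInt f 0 y) x (f x).
Proof.
  intros Hx. apply (@is_derive_RInt R_NormedModule f _ 0 x); [|apply f_cont; lra].
  assert (Hd : 0 < (1 - x) / 2) by lra. exists (mkposreal _ Hd). intros y Hy.
  apply Rabs_lt_between' in Hy; simpl in Hy.
  apply (@RInt_correct R_CompleteNormedModule), ex_RInt_lt_1; lra.
Qed.

Lemma RInt_cvg_at_left_1_from z L : z < 1 ->
  filterlim (fun c => RInt f 0 c) (at_left 1) (locally L) ->
  filterlim (fun c => RInt f z c) (at_left 1) (locally (L - RInt f 0 z)).
Proof.
  intros Hz HL.
  apply (filterlim_ext_loc (fun c => RInt f 0 c - RInt f 0 z)).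
  - exists (mkposreal _ Rlt_0_1). intros c _ Hc. symmetry. apply RInt_lt_1_Chasles; lra.
  - apply (filterlim_comp _ _ _ _ (fun x => x - RInt f 0 z) _ _ _ HL).
    apply (continuity_pt_filterlim (fun x => x - RInt f 0 z)). reg.
Qed.

Variables K a : R.
Hypotheses (a_pos : 0 < a) (K_ge0 : 0 <= K).
Hypothesis f_bound : forall u, 0 <= u < 1 -> Rabs (f u) <= K * Rpower (1 - u) (a - 1).

Lemma is_RInt_power_singularity c c' : c <= c' < 1 ->
  is_RInt (fun u => K * Rpower (1 - u) (a - 1)) c c'
    (K / a * (Rpower (1 - c) a - Rpower (1 - c') a)).
Proof.
  intros Hc. unfold Rpower.
  set (F := fun u => - (K / a) * exp (a * ln (1 - u))).
  replace (K / a * (exp (a * ln (1 - c)) - exp (a * ln (1 - c'))))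
    with (minus (F c') (F c)) by (unfold F, minus, plus, opp; simpl; ring).
  apply (@is_RInt_derive R_CompleteNormedModule); intros x Hx;
    rewrite Rmin_left, Rmax_right in Hx by lra.
  - unfold F. auto_derive; [lra|]. replace (1 + - x) with (1 - x) by ring.
    replace ((a - 1) * ln (1 - x)) with (a * ln (1 - x) + - ln (1 - x)) by ring.
    rewrite exp_plus, exp_Ropp, exp_ln by lra. field. lra.
  - apply (@ex_derive_continuous R_AbsRing R_NormedModule). auto_derive. lra.
Qed.

Lemma abs_RInt_tail_le c c' : 0 <= c <= c' -> c' < 1 ->
  Rabs (RInt f c c') <= K / a * Rpower (1 - c) a.
Proof.
  intros Hc Hc'.
  pose proof (is_RInt_power_singularity c c' (conj (proj2 Hc) Hc')) as Hmaj.
  eapply Rle_trans; [apply abs_RInt_le; [lra|apply ex_RInt_lt_1; lra]|].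
  eapply Rle_trans.
  - apply RInt_le with (g := fun u => K * Rpower (1 - u) (a - 1)); [lra| | |].
    + apply ex_RInt_norm, ex_RInt_lt_1; lra.
    + eexists; exact Hmaj.
    + intros x Hx. apply f_bound. lra.
  - rewrite (is_RInt_unique _ _ _ _ Hmaj).
    assert (0 <= K / a) by (apply Rdiv_le_0_compat; lra).
    assert (0 < Rpower (1 - c') a) by apply exp_pos.
    nra.
Qed.

Lemma RInt_cvg_at_left_1 : exists L, filterlim (fun c => RInt f 0 c) (at_left 1) (locally L).
Proof.
  apply (filterlim_locally_cauchy (F := at_left 1)). intros eps.
  set (C := K / a + 1).
  assert (HC : 1 <= C) by (unfold C; pose proof (Rdiv_le_0_compat K a K_ge0 a_pos); lra).
  destruct (Rpower_lt_eventually_0 a (eps / C) a_pos) as [d [Hd Hsmall]].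
  { apply Rdiv_lt_0_compat; [apply cond_pos | lra]. }
  assert (Htail : forall c c', 0 <= c <= c' -> c' < 1 -> 1 - c < d -> Rabs (RInt f c c') < eps).
  { intros c c' Hc Hc' Hcd. eapply Rle_lt_trans; [apply abs_RInt_tail_le; assumption|].
    pose proof (Hsmall (1 - c) ltac:(lra)). pose proof (exp_pos (a * ln (1 - c))).
    replace (pos eps) with (C * (eps / C)) by (field; lra).
    apply Rle_lt_trans with (C * Rpower (1 - c) a);
      [unfold C, Rpower in *; nra | apply Rmult_lt_compat_l; lra]. }
  assert (Hm : Rmax 0 (1 - d) < 1) by (apply Rmax_lub_lt; lra).
  exists (fun c => Rmax 0 (1 - d) < c < 1). split.
  - exists (mkposreal _ (proj2 (Rlt_0_minus _ _) Hm)).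
    intros x Hx Hx1. apply Rabs_lt_between' in Hx; simpl in Hx. lra.
  - intros u v [Hu Hu1] [Hv Hv1]. pose proof (Rmax_l 0 (1 - d)). pose proof (Rmax_r 0 (1 - d)).
    change (Rabs (RInt f 0 v - RInt f 0 u) < eps).
    destruct (Rle_dec u v).
    + rewrite <- RInt_lt_1_Chasles by lra. apply Htail; lra.
    + rewrite <- Rabs_Ropp, Ropp_minus_distr, <- RInt_lt_1_Chasles by lra. apply Htail; lra.
Qed.

End IntegralUpToOne.

(** * The Laplace transform of the generating function *)

Section BirthDeathLaplace.

Variables (beta delta : R) (N0 : nat) (s : Cplx).
Hypotheses (beta_pos : 0 < beta) (beta_lt_delta : beta < delta) (Re_s_pos : 0 < Cre s).

Definition shat : Cplx := Cscal (/ (delta - beta)) s.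

Definition rate (u : R) : R := (1 - u) * (delta - beta * u).

Definition rhs_weight (u : R) : Cplx :=
  Cmul (Cpow (1 - u) (Csub shat (RtoC 1))) (Cpow (delta - beta * u) (Csub (Copp shat) (RtoC 1))).

Let F := rhs_integrand beta delta N0 s.

Lemma rhs_integrand_weight u : F u = Cscal (u ^ N0) (rhs_weight u).
Proof. reflexivity. Qed.

Lemma rhs_integrand_continuous u : u < 1 ->
  continuous (fun v => fst (F v)) u /\ continuous (fun v => snd (F v)) u.
Proof.
  intros Hu. split; apply (@ex_derive_continuous R_AbsRing R_NormedModule);
    unfold F, rhs_integrand, Cpow, Cexp, Cscal, Cmul, Csub, Cadd, Copp, RtoC; simpl;
    auto_derive; repeat split; nra.
Qed.

Lemma Re_shat_pos : 0 < fst shat.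
Proof.
  unfold shat, Cscal, Cre in *; simpl.
  apply Rmult_lt_0_compat; [apply Rinv_0_lt_compat|]; lra.
Qed.

Lemma rhs_integrand_bound u : 0 <= u < 1 ->
  let b := Rpower (delta - beta) (- fst shat - 1) * Rpower (1 - u) (fst shat - 1) in
  Rabs (fst (F u)) <= b /\ Rabs (snd (F u)) <= b.
Proof.
  intros Hu b.
  set (w := Cadd (Cscal (ln (1 - u)) (Csub shat (RtoC 1)))
                 (Cscal (ln (delta - beta * u)) (Csub (Copp shat) (RtoC 1)))).
  assert (Hpow : 0 <= u ^ N0 <= 1)
    by (split; [apply pow_le; lra | rewrite <- (pow1 N0); apply pow_incr; lra]).
  assert (Hexp : exp (fst w) <= b).
  { unfold b, Rpower. rewrite <- exp_plus. apply exp_le_exp.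
    pose proof Re_shat_pos.
    assert (ln (delta - beta) <= ln (delta - beta * u)) by (apply ln_le; nra).
    cbn [w fst snd Cadd Cscal Csub Copp RtoC]. nra. }
  destruct (Cexp_bound w) as [H1 H2].
  rewrite rhs_integrand_weight. unfold rhs_weight, Cpow. rewrite Cexp_add. fold w.
  cbn [Cscal fst snd]. rewrite !Rabs_mult, (Rabs_pos_eq (u ^ N0)) by lra.
  pose proof (Rabs_pos (fst (Cexp w))); pose proof (Rabs_pos (snd (Cexp w))).
  split; nra.
Qed.

Lemma rhs_integrand_cvg : exists I0, Ccvg (at_left 1) (CRInt F 0) I0.
Proof.
  pose proof Re_shat_pos as Ha.
  assert (HK : 0 <= Rpower (delta - beta) (- fst shat - 1)) by (left; apply exp_pos).
  destruct (RInt_cvg_at_left_1 (fun v => fst (F v))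
              (fun u Hu => proj1 (rhs_integrand_continuous u Hu)) _ _ Ha HK
              (fun u Hu => proj1 (rhs_integrand_bound u Hu))) as [L1 H1].
  destruct (RInt_cvg_at_left_1 (fun v => snd (F v))
              (fun u Hu => proj2 (rhs_integrand_continuous u Hu)) _ _ Ha HK
              (fun u Hu => proj2 (rhs_integrand_bound u Hu))) as [L2 H2].
  exists (L1, L2). split; assumption.
Qed.

Definition decay (t : R) : R := exp ((beta - delta) * t).

Definition flow_den (z t : R) : R := delta - beta * z - (1 - z) * beta * decay t.

Definition flow (z t : R) : R := (delta - beta * z - (1 - z) * delta * decay t) / flow_den z t.

Lemma gfun_flow z t : gfun beta delta N0 z t = flow z t ^ N0.
Proof. reflexivity. Qed.

Lemma flow_0 z : z < 1 -> flow z 0 = z.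
Proof. intros Hz. unfold flow, flow_den, decay. rewrite Rmult_0_r, exp_0. field. nra. Qed.

Section Flow.

Variables z t : R.
Hypotheses (Hz : 0 <= z < 1) (Ht : 0 <= t).

Lemma decay_bounds : 0 < decay t <= 1.
Proof.
  split; [apply exp_pos|]. rewrite <- exp_0. apply exp_le_exp. nra.
Qed.

Lemma flow_den_ge : delta - beta <= flow_den z t.
Proof.
  pose proof decay_bounds.
  assert (0 <= beta * ((1 - z) * (1 - decay t))) by (repeat apply Rmult_le_pos; lra).
  unfold flow_den. lra.
Qed.

Lemma one_minus_flow : 1 - flow z t = (1 - z) * (delta - beta) * decay t / flow_den z t.
Proof.
  pose proof flow_den_ge. unfold flow. field_simplify_eq; [|lra]. unfold flow_den. ring.
Qed.

Lemma delta_minus_beta_flow :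
  delta - beta * flow z t = (delta - beta) * (delta - beta * z) / flow_den z t.
Proof.
  pose proof flow_den_ge. unfold flow. field_simplify_eq; [|lra]. unfold flow_den. ring.
Qed.

Lemma flow_bounds : z <= flow z t < 1.
Proof.
  pose proof decay_bounds. pose proof flow_den_ge. split.
  - assert (flow z t - z = (1 - z) * (delta - beta * z) * (1 - decay t) / flow_den z t)
      by (unfold flow; field_simplify_eq; [unfold flow_den; ring | lra]).
    assert (0 <= (1 - z) * (delta - beta * z) * (1 - decay t) / flow_den z t)
      by (apply Rdiv_le_0_compat; [repeat apply Rmult_le_pos|]; nra).
    lra.
  - assert (0 < (1 - z) * (delta - beta) * decay t / flow_den z t)
      by (apply Rdiv_lt_0_compat; [apply Rmult_lt_0_compat; [apply Rmult_lt_0_compat|]|]; lra).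
    rewrite <- one_minus_flow in *. lra.
Qed.

Lemma one_minus_flow_le_decay : 1 - flow z t <= decay t.
Proof.
  pose proof decay_bounds. pose proof flow_den_ge. rewrite one_minus_flow.
  apply Rle_div_l; [lra|].
  assert (0 <= z * (delta - beta) * decay t) by (repeat apply Rmult_le_pos; lra).
  assert (0 <= decay t * (flow_den z t - (delta - beta))) by (apply Rmult_le_pos; lra).
  nra.
Qed.

Lemma is_derive_flow : is_derive (flow z) t (rate (flow z t)).
Proof.
  pose proof flow_den_ge. unfold rate, flow, flow_den, decay in *.
  auto_derive; [lra|]. field. lra.
Qed.

Lemma continuous_rate_flow : continuous (fun r => rate (flow z r)) t.
Proof.
  pose proof flow_den_ge. apply (@ex_derive_continuous R_AbsRing R_NormedModule).
  unfold rate, flow, flow_den, decay in *. auto_derive. lra.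
Qed.

End Flow.

Lemma flow_cvg_1 z : 0 <= z < 1 -> filterlim (flow z) (Rbar_locally p_infty) (at_left 1).
Proof.
  intros Hz P [eps HP].
  exists (Rmax 0 (ln eps / (beta - delta))). intros T HT.
  pose proof (Rmax_l 0 (ln eps / (beta - delta))). pose proof (Rmax_r 0 (ln eps / (beta - delta))).
  assert (Hdecay : decay T < eps).
  { rewrite <- (exp_ln eps) by apply cond_pos. apply exp_increasing.
    apply (Rmult_lt_reg_r (/ (delta - beta))); [apply Rinv_0_lt_compat; lra|].
    replace ((beta - delta) * T * / (delta - beta)) with (- T) by (field; lra).
    replace (ln eps * / (delta - beta)) with (- (ln eps / (beta - delta))) by (field; lra).
    lra. }
  pose proof (flow_bounds z T Hz ltac:(lra)). pose proof (one_minus_flow_le_decay z T Hz ltac:(lra)).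
  apply HP; [|lra]. apply Rabs_lt_between'. lra.
Qed.

Lemma prefactor_weight_flow z t : 0 <= z < 1 -> 0 <= t ->
  Cscal (rate (flow z t)) (Cmul (rhs_prefactor beta delta z s) (rhs_weight (flow z t)))
  = Cexp (Copp (Cscal t s)).
Proof.
  intros Hz Ht. pose proof (flow_bounds z t Hz Ht). pose proof (flow_den_ge z t Hz Ht).
  unfold rate, rhs_weight, rhs_prefactor. fold shat.
  rewrite Cpow_combine by (try apply Rdiv_lt_0_compat; nra).
  rewrite one_minus_flow, delta_minus_beta_flow by assumption.
  replace ((delta - beta * z) / (1 - z) * ((1 - z) * (delta - beta) * decay t / flow_den z t) /
           ((delta - beta) * (delta - beta * z) / flow_den z t)) with (exp ((beta - delta) * t))
    by (unfold decay; field; repeat split; nra).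
  rewrite Cpow_exp. f_equal. unfold shat, Cscal, Copp; simpl. f_equal; field; lra.
Qed.

Lemma prefactor_weight z : 0 <= z < 1 ->
  Cscal (rate z) (Cmul (rhs_prefactor beta delta z s) (rhs_weight z)) = RtoC 1.
Proof.
  intros Hz. rewrite <- (flow_0 z) at 1 3 by lra.
  rewrite prefactor_weight_flow by lra.
  unfold Cexp, Copp, Cscal, RtoC; simpl.
  rewrite !Rmult_0_l, Ropp_0, exp_0, cos_0, sin_0. f_equal; ring.
Qed.

Lemma laplace_integrand_flow z t : 0 <= z < 1 -> 0 <= t ->
  laplace_integrand beta delta N0 z s t
  = Cmul (rhs_prefactor beta delta z s) (Cscal (rate (flow z t)) (F (flow z t))).
Proof.
  intros Hz Ht. unfold laplace_integrand.
  rewrite gfun_flow, rhs_integrand_weight, <- (prefactor_weight_flow z t Hz Ht).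
  generalize (rhs_prefactor beta delta z s) (rhs_weight (flow z t)) (rate (flow z t))
    (flow z t ^ N0). intros [p1 p2] [w1 w2] c k.
  unfold Cscal, Cmul; cbn [fst snd]. f_equal; ring.
Qed.

Lemma is_RInt_flow_subst (g : R -> R) z T : 0 <= z < 1 -> 0 <= T ->
  (forall u, u < 1 -> continuous g u) ->
  is_RInt (fun t => rate (flow z t) * g (flow z t)) 0 T (RInt g z (flow z T)).
Proof.
  intros Hz HT Hg.
  assert (H : is_RInt (fun t => scal (rate (flow z t)) (g (flow z t))) 0 T
                (RInt g (flow z 0) (flow z T))).
  { apply (@is_RInt_comp R_CompleteNormedModule g (flow z) (fun t => rate (flow z t)));
      intros t Ht; rewrite Rmin_left, Rmax_right in Ht by lra.
    - apply Hg, (flow_bounds z t Hz); lra.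
    - split; [apply is_derive_flow | apply continuous_rate_flow]; auto; lra. }
  rewrite flow_0 in H by lra. exact H.
Qed.

Lemma Cis_RInt_laplace z T : 0 <= z < 1 -> 0 <= T ->
  Cis_RInt (laplace_integrand beta delta N0 z s) 0 T
    (Cmul (rhs_prefactor beta delta z s) (CRInt F z (flow z T))).
Proof.
  intros Hz HT.
  eapply Cis_RInt_ext; [|apply Cis_RInt_Cmul_l].
  - intros t Ht. rewrite Rmin_left, Rmax_right in Ht by lra.
    symmetry. apply laplace_integrand_flow; [assumption | lra].
  - split; apply is_RInt_flow_subst; try assumption; intros u Hu;
      apply (rhs_integrand_continuous u Hu).
Qed.

Lemma Ccvg_CRInt_from I0 z : z < 1 -> Ccvg (at_left 1) (CRInt F 0) I0 ->
  Ccvg (at_left 1) (CRInt F z) (Csub I0 (CRInt F 0 z)).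
Proof.
  intros Hz [H1 H2]; split; apply RInt_cvg_at_left_1_from; try assumption;
    intros u Hu; apply (rhs_integrand_continuous u Hu).
Qed.

Lemma rhs_improper I0 z : 0 <= z < 1 -> Ccvg (at_left 1) (CRInt F 0) I0 ->
  Cimproper_int_right F z 1 (Csub I0 (CRInt F 0 z)).
Proof.
  intros Hz HI0. apply Cimproper_int_right_of_cvg with (J := CRInt F z).
  - intros c Hc. split; apply (@RInt_correct R_CompleteNormedModule), ex_RInt_lt_1; try lra;
      intros u Hu; apply (rhs_integrand_continuous u Hu).
  - apply Ccvg_CRInt_from; [lra | assumption].
Qed.

(* With [I0] the integral of [F] over [0, 1) this is [P(z) * \int_z^1 F]; the ODE
   below holds for every [I0]. *)
Definition laplace_transform (I0 : Cplx) (z : R) : Cplx :=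
  Cmul (rhs_prefactor beta delta z s) (Csub I0 (CRInt F 0 z)).

Lemma laplace_improper I0 z : 0 <= z < 1 -> Ccvg (at_left 1) (CRInt F 0) I0 ->
  Cimproper_int_inf (laplace_integrand beta delta N0 z s) 0 (laplace_transform I0 z).
Proof.
  intros Hz HI0.
  apply Cimproper_int_inf_of_cvg
    with (J := fun T => Cmul (rhs_prefactor beta delta z s) (CRInt F z (flow z T))).
  - intros T HT. apply Cis_RInt_laplace; assumption.
  - refine (Ccvg_Cmul_l _ _ _ _ _).
    destruct (Ccvg_CRInt_from I0 z ltac:(lra) HI0) as [H1 H2].
    split; [exact (filterlim_comp _ _ _ (flow z) _ _ _ _ (flow_cvg_1 z Hz) H1)
           |exact (filterlim_comp _ _ _ (flow z) _ _ _ _ (flow_cvg_1 z Hz) H2)].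
Qed.

Lemma Cis_derive_prefactor z : 0 <= z < 1 ->
  Cis_derive (fun x => rhs_prefactor beta delta x s) z
    (Cscal ((delta - beta) / rate z) (Cmul (rhs_prefactor beta delta z s) shat)).
Proof.
  intros Hz. unfold rhs_prefactor. fold shat.
  replace ((delta - beta) / rate z)
    with ((delta - beta) / (1 - z) ^ 2 / ((delta - beta * z) / (1 - z)))
    by (unfold rate; field; split; nra).
  apply (Cis_derive_Cpow (fun x => (delta - beta * x) / (1 - x)));
    [apply Rdiv_lt_0_compat; nra|].
  auto_derive; [lra|]. field. lra.
Qed.

Lemma Cis_derive_tail I0 z : z < 1 ->
  Cis_derive (fun x => Csub I0 (CRInt F 0 x)) z (Copp (F z)).
Proof.
  intros Hz. split; cbn [Csub Cadd Copp CRInt fst snd].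
  - pose proof (is_derive_plus _ _ _ _ _ (is_derive_const (fst I0) z)
      (is_derive_opp _ _ _ (is_derive_RInt_lt_1 (fun v => fst (F v))
         (fun u Hu => proj1 (rhs_integrand_continuous u Hu)) z Hz))) as H.
    rewrite plus_zero_l in H. exact H.
  - pose proof (is_derive_plus _ _ _ _ _ (is_derive_const (snd I0) z)
      (is_derive_opp _ _ _ (is_derive_RInt_lt_1 (fun v => snd (F v))
         (fun u Hu => proj2 (rhs_integrand_continuous u Hu)) z Hz))) as H.
    rewrite plus_zero_l in H. exact H.
Qed.

Lemma laplace_transform_ode I0 z : 0 <= z < 1 ->
  exists dG, Cis_derive (laplace_transform I0) z dG /\
    Cscal (rate z) dG = Csub (Cmul s (laplace_transform I0 z)) (RtoC (z ^ N0)).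
Proof.
  intros Hz. eexists. split.
  - apply Cis_derive_mul; [apply Cis_derive_prefactor | apply Cis_derive_tail]; lra.
  - rewrite rhs_integrand_weight, ode_algebra by (apply prefactor_weight, Hz).
    f_equal. f_equal. unfold shat, Cscal. destruct s as [s1 s2]; cbn [fst snd].
    assert (0 < rate z) by (unfold rate; apply Rmult_lt_0_compat; nra).
    f_equal; field; lra.
Qed.

End BirthDeathLaplace.

Theorem mainTheorem6 (beta delta : R) (N0 : nat) (s : Cplx)
  (hbeta : 0 < beta) (hbd : beta < delta) (hs : 0 < Cre s) :
  exists G : R -> Cplx,
    (forall z, 0 <= z < 1 ->
       Cimproper_int_inf (laplace_integrand beta delta N0 z s) 0 (G z) /\
       exists I : Cplx,
         Cimproper_int_right (rhs_integrand beta delta N0 s) z 1 I /\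
         G z = Cmul (rhs_prefactor beta delta z s) I) /\
    (forall z, 0 <= z < 1 ->
       exists dG : Cplx,
         C_deriv_within G (fun h => 0 <= h < 1) z dG /\
         Cscal ((1 - z) * (delta - beta * z)) dG
           = Csub (Cmul s (G z)) (RtoC (z ^ N0))).
Proof.
  destruct (rhs_integrand_cvg beta delta N0 s hbeta hbd hs) as [I0 HI0].
  exists (laplace_transform beta delta N0 s I0). split; intros z Hz.
  - split; [apply laplace_improper; assumption|].
    exists (Csub I0 (CRInt (rhs_integrand beta delta N0 s) 0 z)).
    split; [apply rhs_improper; assumption | reflexivity].
  - destruct (laplace_transform_ode beta delta N0 s hbeta hbd hs I0 z Hz) as [dG [HdG Hode]].
    exists dG. split; [apply C_deriv_within_of_Cis_derive, HdG | exact Hode].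
Qed.
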